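(* For integers $q\ge1$, $a$, $n$ let $S(q,a,n)=\sum_{x=1}^q e\big(\frac{ax^2+nx}{q}\big)$, and for integers $n_1,n_2,n_3,m$ let $$T(q;n_1,n_2,n_3,m)=\sum_{\substack{a=1\\ (a,q)=1}}^q S(q,a,n_1)S(q,a,n_2)S(q,a,n_3)\,e\Big(\frac{\overline{a}\,m}{q}\Big),$$ where $\overline{a}$ is the inverse of $a$ modulo $q$. Let $p>2$ be a prime. Then for every positive integer $r$ and all integers $n_1,n_2,n_3,m$, $$|T(p^r;n_1,n_2,n_3,m)|\le p^{5r/2},$$ and moreover $$|T(p;n_1,n_2,n_3,m)|\le p^{2}.$$
   Context: $e(z)=e^{2\pi i z}$. *)

From HB Require Import structures.
From mathcomp Require Import all_boot all_order all_algebra.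
From mathcomp Require Import all_classical all_reals.
From mathcomp Require Import exp trigo.
From mathcomp Require Export complex.
Set Implicit Arguments. Unset Strict Implicit. Unset Printing Implicit Defensive.
Import Order.TTheory GRing.Theory Num.Theory.
Local Open Scope ring_scope.
Local Open Scope complex_scope.

Definition ee (R : realType) (z : R) : R[i] :=
  (cos (2 * pi * z)) +i* (sin (2 * pi * z)).

Definition S (R : realType) (q : nat) (a n : int) : R[i] :=
  \sum_(1 <= x < q.+1) ee ((a * (x%:Z) ^+ 2 + n * x%:Z)%:~R / (q%:R : R)).

(* an inverse of a modulo q (some b in [0,q) with a*b = 1 mod q, 0 if none) *)
Definition invmod (q a : nat) : nat :=
  odflt 0%N (omap (@nat_of_ord q) [pick b : 'I_q | a * b == 1 %[mod q]]%N).

Definition T (R : realType) (q : nat) (n1 n2 n3 m : int) : R[i] :=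
  \sum_(1 <= a < q.+1 | coprime a q)
     S R q a%:Z n1 * S R q a%:Z n2 * S R q a%:Z n3
     * ee (((invmod q a)%:Z * m)%:~R / (q%:R : R)).

From HB Require Import structures.
From mathcomp Require Import all_boot all_order all_algebra.
From mathcomp Require Import all_classical all_reals.
From mathcomp Require Import exp trigo complex.
From mathcomp Require Import fingroup cyclic finfield.
From mathcomp Require Import ring lra.

(* For odd q and (a, q) = 1, expanding |S(q,a,n)|^2 and substituting x -> x + y gives
   sum_x e((a x^2 + n x)/q) sum_y e(2axy/q); the inner sum vanishes unless q | x, so
   |S(q,a,n)|^2 = q and |T(q)| <= phi(q) q^(3/2) <= q^(5/2).
   Over F_p, with e_p(x) = e(x/p), completing the square gives
   S(p,a,n) = e_p(-n^2/(4a)) (a/p) g, where (a/p) is the Legendre symbol and g the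
   quadratic Gauss sum, |g|^2 = p. Substituting b = 1/a then yields
   T(p) = g^3 sum_b (b/p) e_p(bK) = g^4 (K/p) for K = m - (n1^2+n2^2+n3^2)/4,
   so |T(p)| <= p^2. *)

Set Implicit Arguments.
Unset Strict Implicit.
Unset Printing Implicit Defensive.
Import Order.TTheory GRing.Theory Num.Theory.
Local Open Scope ring_scope.
Local Open Scope complex_scope.

Section Exponential.
Variable R : realType.

Lemma eeD (x y : R) : ee (x + y) = ee x * ee y.
Proof.
rewrite /ee mulrDr cosD sinD; apply/eqP.
by rewrite eq_complex /=; apply/andP; split; apply/eqP; ring.
Qed.

Lemma ee0 : ee (0 : R) = 1.
Proof. by rewrite /ee mulr0 cos0 sin0. Qed.

Lemma ee_conj (x : R) : (ee x)^* = ee (- x).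
Proof. by rewrite /ee mulrN cosN sinN. Qed.

Lemma ee_int (k : int) : ee (k%:~R : R) = 1.
Proof.
have ee_nat n : ee (n%:R : R) = 1.
  elim: n => [|n IHn]; first exact: ee0.
  by rewrite -addn1 natrD eeD IHn mul1r /ee mulr1 mulr_natl cos2pi sin2pi.
case: k => n; first exact: ee_nat.
by rewrite NegzE rmorphN /= -ee_conj ee_nat conjc1.
Qed.

Lemma norm_ee (x : R) : `|ee x| = 1.
Proof. by rewrite normc_def /= cos2Dsin2 sqrtr1. Qed.

Lemma ee_neq1 (t : R) : 0 < t < 1 -> ee t != 1.
Proof.
move=> /andP[t_gt0 t_lt1]; apply/negP => /eqP[cos1 _].
have pi_gt0 := pi_gt0 R.
have sin_gt0 : 0 < sin (pi * t) by apply: sin_gt0_pi; apply/andP; split; nra.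
move: cos1; rewrite -mulrA mulr_natl cos_mulr2n cos2sin2 mulr2n.
nra.
Qed.

End Exponential.

Lemma sum_periodic_succ (V : nmodType) (q : nat) (f : nat -> V) :
  (forall x, f (x + q)%N = f x) ->
  \sum_(0 <= x < q) f x.+1 = \sum_(0 <= x < q) f x.
Proof.
case: q => [|q] f_periodic; first by rewrite !big_geq.
rewrite [RHS]big_nat_recl // [LHS]big_nat_recr //= addrC.
by rewrite -[q.+1]add0n f_periodic.
Qed.

Lemma sum_periodic_addn (V : nmodType) (q y : nat) (f : nat -> V) :
  (forall x, f (x + q)%N = f x) ->
  \sum_(0 <= x < q) f (x + y)%N = \sum_(0 <= x < q) f x.
Proof.
elim: y f => [|y IHy] f f_periodic; first by under eq_bigr do rewrite addn0.
rewrite -(IHy f f_periodic) -(@sum_periodic_succ _ _ (fun x => f (x + y)%N)).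
  by apply: eq_bigr => x _; rewrite addnS addSn.
by move=> x; rewrite addnAC f_periodic.
Qed.

Section AdditiveCharacter.
Variable R : realType.

Definition achar (q : nat) (k : int) : R[i] := ee (k%:~R / q%:R).

Variable q : nat.

Lemma acharD (k l : int) : achar q (k + l) = achar q k * achar q l.
Proof. by rewrite /achar intrD mulrDl eeD. Qed.

Lemma achar0 : achar q 0 = 1.
Proof. by rewrite /achar mul0r ee0. Qed.

Lemma achar_conj (k : int) : (achar q k)^* = achar q (- k).
Proof. by rewrite /achar ee_conj intrN mulNr. Qed.

Hypothesis q_gt0 : (0 < q)%N.

Lemma acharDMq (k j : int) : achar q (k + j * q%:Z) = achar q k.
Proof. by rewrite acharD /achar intrM mulfK ?pnatr_eq0 -?lt0n // ee_int mulr1. Qed.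

Lemma achar_mod (k : int) : achar q (k %% q)%Z = achar q k.
Proof. by rewrite [in RHS](divz_eq k q) addrC acharDMq. Qed.

Lemma achar_eq1 (k : int) : (achar q k == 1) = (q%:Z %| k)%Z.
Proof.
apply/idP/idP => [|/dvdzP[j ->]]; last by rewrite -[j * _]add0r acharDMq achar0.
rewrite -achar_mod => /eqP achar1; apply/dvdz_mod0P; apply: contra_eq achar1 => mod_neq0.
have q_neq0 : q%:Z != 0 by rewrite eqz_nat -lt0n.
apply: ee_neq1; apply/andP; split.
  by rewrite divr_gt0 ?ltr0n // ltr0z lt_neqAle eq_sym mod_neq0 modz_ge0.
rewrite ltr_pdivrMr ?ltr0n // mul1r (_ : q%:R = q%:Z%:~R :> R) //.
by rewrite ltr_int ltz_pmod // ltz_nat.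
Qed.

Lemma sum_achar (k : int) :
  \sum_(0 <= y < q) achar q (k * y%:Z) = if (q%:Z %| k)%Z then q%:R else 0.
Proof.
have acharX n : achar q k ^+ n = achar q (k * n%:Z).
  elim: n => [|n IHn]; first by rewrite mulr0 achar0.
  by rewrite exprS IHn -acharD -addn1 PoszD mulrDr mulr1 addrC.
under eq_bigr do rewrite -acharX.
case: ifP => [/dvdzP[j ->] | k_ndvd].
  rewrite -[j * _]add0r acharDMq achar0.
  by under eq_bigr do rewrite expr1n; rewrite sumr_const_nat subn0.
have /negPf k_neq1 : achar q k != 1 by rewrite achar_eq1 k_ndvd.
have : (achar q k - 1) * \sum_(0 <= y < q) achar q k ^+ y = 0.
  by rewrite big_mkord -subrX1 acharX -[k * _]add0r acharDMq achar0 subrr.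
by move/eqP; rewrite mulf_eq0 subr_eq0 k_neq1 => /eqP.
Qed.

Definition qphase (a n : int) (x : nat) : int := a * x%:Z ^+ 2 + n * x%:Z.

Lemma achar_qphase_periodic (a n : int) (x : nat) :
  achar q (qphase a n (x + q)) = achar q (qphase a n x).
Proof.
rewrite -[RHS](acharDMq _ (2 * a * x%:Z + a * q%:Z + n)); congr achar.
by rewrite /qphase PoszD; ring.
Qed.

Lemma S_sum (a n : int) : S R q a n = \sum_(0 <= x < q) achar q (qphase a n x).
Proof.
rewrite /S big_add1 /= -(@sum_periodic_succ _ _ (fun x => achar q (qphase a n x))) //.
exact: achar_qphase_periodic.
Qed.

End AdditiveCharacter.

Section OddModulus.
Variables (R : realType) (q : nat).
Hypothesis q_odd : odd q.

Let q_gt0 : (0 < q)%N := odd_gt0 q_odd.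

Lemma sqr_norm_S (a : nat) (n : int) : coprime a q -> `|S R q a n| ^+ 2 = q%:R.
Proof.
move=> aq_coprime; pose phase := qphase a n.
have shifted y : \sum_(0 <= x < q) achar R q (phase x) * achar R q (- phase y) =
                 \sum_(0 <= x < q) achar R q (phase x) * achar R q (2 * a%:Z * x%:Z * y%:Z).
  rewrite -(sum_periodic_addn y) => [|x]; last by rewrite /phase achar_qphase_periodic.
  by apply: eq_bigr => x _; rewrite -!acharD /phase /qphase PoszD; congr achar; ring.
have no_multiple x : (0 < x < q)%N -> (q%:Z %| 2 * a%:Z * x%:Z)%Z = false.
  move=> /andP[x_gt0 x_ltq]; apply/negP; rewrite dvdzE !abszM /= Gauss_dvdr.
    by move/(dvdn_leq x_gt0); rewrite leqNgt x_ltq.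
  by rewrite coprimeMr [coprime q a]coprime_sym aq_coprime andbT coprime_sym coprime2n.
have conj_S : (\sum_(0 <= x < q) achar R q (phase x))^* =
              \sum_(0 <= x < q) achar R q (- phase x).
  by rewrite (raddf_sum (@conjc R)); apply: eq_bigr => x _; exact: achar_conj.
rewrite sqr_normc S_sum // conj_S.
rewrite mulr_suml; under eq_bigr do rewrite mulr_sumr.
rewrite exchange_big; under eq_bigr do rewrite shifted.
rewrite exchange_big; under eq_bigr do rewrite -mulr_sumr sum_achar //.
rewrite big_ltn // mulr0 dvdz0 /phase /qphase expr0n /= !mulr0 addr0 achar0 mul1r.
rewrite big_nat big1 ?addr0 // => x x_range.
by rewrite no_multiple // mulr0.
Qed.

Lemma norm_S (a : nat) (n : int) :
  coprime a q -> `|S R q a n| = (Num.sqrt (q%:R : R))%:C.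
Proof.
move=> aq_coprime; apply/eqP; rewrite -(@eqrXn2 _ 2) ?normr_ge0 ?ler0c ?sqrtr_ge0 //.
by rewrite sqr_norm_S // -rmorphXn /= sqr_sqrtr ?ler0n // rmorph_nat.
Qed.

Lemma norm_T_le (n1 n2 n3 m : int) :
  `|T R q n1 n2 n3 m| <= (Num.sqrt (q%:R : R) ^+ 5)%:C.
Proof.
have -> : (Num.sqrt (q%:R : R) ^+ 5)%:C =
          \sum_(1 <= a < q.+1) (Num.sqrt (q%:R : R))%:C ^+ 3.
  rewrite sumr_const_nat subSS subn0 -rmorphXn -rmorphMn /=; congr (_%:C).
  set s := Num.sqrt _; by rewrite -mulr_natr -(sqr_sqrtr (ler0n R q)) -/s -exprD.
rewrite /T big_mkcond /=; apply: le_trans (ler_norm_sum _ _ _) _.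
apply: ler_sum => a _; case: ifP => aq_coprime; last by rewrite normr0 exprn_ge0 ?ler0c ?sqrtr_ge0.
by rewrite !normrM norm_ee mulr1 !norm_S // -!mulrA -expr2 -exprS.
Qed.

End OddModulus.

Section QuadraticCharacter.
Variable F : finFieldType.
Hypothesis F_odd : odd #|F|.

Lemma finField_two_neq0 : (2%:R : F) != 0.
Proof.
apply/eqP => two0.
have ord_dvd2 : (#[(1 : F)%R]%g %| 2)%N.
  by rewrite order_dvdn FinRing.zmodXgE; apply/eqP.
have ord_dvdF : (#[(1 : F)%R]%g %| #|F|)%N by rewrite -cardsT order_dvdG ?inE.
have : (#[(1 : F)%R]%g %| gcdn 2 #|F|)%N by rewrite dvdn_gcd ord_dvd2.
rewrite (eqP (_ : coprime 2 #|F|)) ?coprime2n // dvdn1 order_eq1.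
by rewrite (negPf (oner_neq0 F)).
Qed.

Lemma oppr1_neq1 : (-1 : F) != 1.
Proof.
apply: contraNneq finField_two_neq0 => m1_eq1.
by rewrite mulr2n -[X in 1 + X]opprK m1_eq1 subrr.
Qed.

Lemma card_finField_half : #|F| = (#|F|./2).*2.+1.
Proof. by rewrite -[LHS]odd_double_half F_odd. Qed.

Lemma expf_card_half (x : F) : x != 0 -> x ^+ (#|F|./2).*2 = 1.
Proof.
move=> x_neq0; apply: (mulfI x_neq0).
by rewrite mulr1 -exprS -card_finField_half expf_card.
Qed.

Lemma expf_half_pm1 (x : F) : x != 0 ->
  (x ^+ #|F|./2 == 1) || (x ^+ #|F|./2 == -1).
Proof. by move=> x_neq0; rewrite -sqrf_eq1 -exprM muln2 expf_card_half. Qed.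

Lemma euler_criterionP (t : F) : t != 0 ->
  reflect (exists s, t = s ^+ 2) (t ^+ #|F|./2 == 1).
Proof.
move=> t_neq0; apply: (iffP eqP) => [t_half | [s t_sqr]]; last first.
  have s_neq0 : s != 0 by apply: contraNneq t_neq0 => s0; rewrite t_sqr s0 expr0n.
  by rewrite t_sqr -exprM mul2n expf_card_half.
have half_gt0 : (0 < #|F|./2)%N by rewrite half_gt0 finNzRing_gt1.
have [z _ z_prim] : exists2 z, z \in enum (predC1 (0 : F)) & (#|F|./2).*2.-primitive_root z.
  apply/hasP; apply: has_prim_root; rewrite ?double_gt0 ?enum_uniq //.
    by apply/allP => x; rewrite mem_enum unity_rootE => /expf_card_half ->.
  by rewrite -cardE cardC1 [in leqRHS]card_finField_half.
have [[i _] /= t_pow] := prim_rootP z_prim (expf_card_half t_neq0).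
have : ((#|F|./2).*2 %| i * #|F|./2)%N by rewrite (prim_order_dvd z_prim) exprM -t_pow t_half.
rewrite -mul2n dvdn_pmul2r // => /dvdnP[j i_eq].
by exists (z ^+ j); rewrite t_pow i_eq -exprM mulnC.
Qed.

Definition legendre (t : F) : int :=
  if t == 0 then 0 else if t ^+ #|F|./2 == 1 then 1 else -1.

Lemma legendre0 : legendre 0 = 0.
Proof. by rewrite /legendre eqxx. Qed.

Lemma legendreM (s t : F) : legendre (s * t) = legendre s * legendre t.
Proof.
rewrite /legendre mulf_eq0; have [-> | s_neq0] := eqVneq s 0; first by rewrite /= mul0r.
have [-> | t_neq0] /= := eqVneq t 0; first by rewrite mulr0.
have m1_neq1 := negPf oppr1_neq1.
rewrite exprMn; case/orP: (expf_half_pm1 s_neq0) => /eqP ->;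
  case/orP: (expf_half_pm1 t_neq0) => /eqP ->;
  by rewrite ?mul1r ?mulr1 ?mulrNN ?mulr1 ?eqxx ?m1_neq1.
Qed.

Lemma legendreV (t : F) : legendre t^-1 = legendre t.
Proof. by rewrite /legendre invr_eq0 exprVn invr_eq1. Qed.

Lemma legendre_sqr (t : F) : t != 0 -> legendre t * legendre t = 1.
Proof. by move=> t_neq0; rewrite /legendre (negPf t_neq0); case: ifP. Qed.

Lemma normr_legendre (t : F) : t != 0 -> `|legendre t| = 1.
Proof. by move=> t_neq0; rewrite /legendre (negPf t_neq0); case: ifP. Qed.

Lemma card_sqrt (t : F) : #|[pred x : F | x ^+ 2 == t]|%:Z = 1 + legendre t.
Proof.
rewrite /legendre; have [-> | t_neq0] := eqVneq t 0.
  by rewrite (@eq_card _ _ (pred1 0)) ?card1 // => x; rewrite !inE sqrf_eq0.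
case: (euler_criterionP t_neq0) => [[s t_sqr] | no_root]; last first.
  rewrite eq_card0 ?subrr // => x; apply/eqP => /= x_sqr.
  by apply: no_root; exists x.
have s_neq0 : s != 0 by apply: contraNneq t_neq0 => s0; rewrite t_sqr s0 expr0n.
have s_neq_opp : s != - s.
  by rewrite -subr_eq0 opprK -mulr2n -mulr_natl mulf_neq0 ?finField_two_neq0.
rewrite (@eq_card _ _ (pred2 s (- s))) => [|x]; last by rewrite !inE t_sqr eqf_sqr.
by rewrite card2 s_neq_opp.
Qed.

Lemma sum_sqr (V : zmodType) (f : F -> V) :
  \sum_(x : F) f (x ^+ 2) = \sum_(t : F) f t + \sum_(t : F) f t *~ legendre t.
Proof.
rewrite (partition_big (fun x => x ^+ 2) predT) //= -big_split /=.
apply: eq_bigr => t _; rewrite (eq_bigr (fun=> f t)) => [|x /eqP -> //].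
by rewrite sumr_const -mulrz_nat natz card_sqrt mulrzDr mulr1z.
Qed.

Lemma sum_legendre : \sum_(t : F) legendre t = 0.
Proof.
have := sum_sqr (fun=> 1 : int); under [in X in _ = _ + X]eq_bigr do rewrite intz.
by move/eqP; rewrite addrC -subr_eq subrr eq_sym => /eqP.
Qed.

End QuadraticCharacter.

Section GaussSum.
Variables (F : finFieldType) (V : comPzRingType) (psi : F -> V).
Hypothesis F_odd : odd #|F|.
Hypothesis psiD : {morph psi : x y / x + y >-> x * y}.
Hypothesis sum_psi : \sum_(x : F) psi x = 0.

Definition gauss_sum (c : F) : V := \sum_(x : F) psi (c * x ^+ 2).

Definition legendre_sum (c : F) : V := \sum_(t : F) psi (c * t) *~ legendre t.

Lemma sum_psiM (c : F) : c != 0 -> \sum_(x : F) psi (c * x) = 0.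
Proof. by move=> c_neq0; rewrite -[RHS]sum_psi [RHS](reindex_inj (mulfI c_neq0)). Qed.

Lemma gauss_sum_legendre_sum (c : F) : c != 0 -> gauss_sum c = legendre_sum c.
Proof.
move=> c_neq0; rewrite /gauss_sum (sum_sqr F_odd (fun t => psi (c * t))).
by rewrite sum_psiM // add0r.
Qed.

Lemma legendre_sum0 : legendre_sum 0 = 0.
Proof.
rewrite /legendre_sum; under eq_bigr do rewrite mul0r.
by rewrite -mulrz_sumr sum_legendre.
Qed.

Lemma legendre_sumE (c : F) : c != 0 -> legendre_sum c = legendre_sum 1 *~ legendre c.
Proof.
move=> c_neq0; rewrite /legendre_sum (reindex_inj (mulfI (invr_neq0 c_neq0))) mulrz_suml.
apply: eq_bigr => t _; rewrite mulrA mulfV // mul1r.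
by rewrite (legendreM F_odd) legendreV mulrC mulrzA.
Qed.

Lemma gauss_sum_legendre (c : F) : c != 0 -> gauss_sum c = gauss_sum 1 *~ legendre c.
Proof.
by move=> c_neq0; rewrite !gauss_sum_legendre_sum ?oner_eq0 // legendre_sumE.
Qed.

Lemma sum_psi_quadratic (A N : F) : A != 0 ->
  \sum_(u : F) psi (A * u ^+ 2 + N * u) = psi (- (N ^+ 2 / (4%:R * A))) * gauss_sum A.
Proof.
move=> A_neq0; have two_neq0 := finField_two_neq0 F_odd.
have four_neq0 : (4%:R : F) != 0 by rewrite (natrM F 2 2) mulf_neq0.
rewrite (reindex_inj (addIr (- (N / (2%:R * A))))) /gauss_sum mulr_sumr.
apply: eq_bigr => u _; rewrite -psiD; congr psi.
by field; rewrite A_neq0 four_neq0 two_neq0.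
Qed.

End GaussSum.

Lemma coprime_Fp (p : nat) (u : 'F_p) : prime p -> coprime u p = (u != 0).
Proof.
move=> p_prime; rewrite coprime_sym prime_coprime //.
have u_lt_p : (u < p)%N by rewrite -[p in (_ < p)%N](Fp_cast p_prime) ltn_ord.
have [-> | u_neq0] := eqVneq u 0; first by rewrite dvdn0.
have u_gt0 : (0 < u)%N by rewrite lt0n; apply: contra_neq u_neq0 => u0; apply: val_inj.
by apply/negP => /(dvdn_leq u_gt0); rewrite leqNgt u_lt_p.
Qed.

Lemma prime_gt2_odd (p : nat) : prime p -> (2 < p)%N -> odd p.
Proof. by move=> p_prime; apply: contraLR => /(prime_oddPn p_prime) ->. Qed.

Section PrimeModulus.
Variables (R : realType) (p : nat).
Hypotheses (p_prime : prime p) (p_gt2 : (2 < p)%N).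

Let p_gt0 : (0 < p)%N := prime_gt0 p_prime.

Let p_odd : odd p := prime_gt2_odd p_prime p_gt2.

Let Fp_odd : odd #|'F_p|.
Proof. by rewrite card_Fp. Qed.

Definition eFp (u : 'F_p) : R[i] := achar R p u.

Lemma eFp_nat (n : nat) : eFp n%:R = achar R p n.
Proof. by rewrite /eFp val_Fp_nat // -modz_nat achar_mod. Qed.

Lemma eFp_int (k : int) : eFp k%:~R = achar R p k.
Proof.
have [n k_mod] : exists n : nat, (k %% p)%Z = n%:Z.
  by exists (absz (k %% p)%Z); rewrite gez0_abs // modz_ge0 // eqz_nat -lt0n.
rewrite -achar_mod // k_mod -eFp_nat; congr eFp.
rewrite {1}(divz_eq k p) k_mod rmorphD rmorphM /= -!pmulrn.
by rewrite (pchar_Fp_0 p_prime) mulr0 add0r.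
Qed.

Lemma eFpD : {morph eFp : u v / u + v >-> u * v}.
Proof. by move=> u v; rewrite -[u]natr_Zp -[v]natr_Zp -natrD !eFp_nat PoszD acharD. Qed.

Lemma sum_Fp (V : nmodType) (f : nat -> V) :
  \sum_(u : 'F_p) f u = \sum_(0 <= i < p) f i.
Proof. by rewrite -[in RHS](Fp_cast p_prime) big_mkord. Qed.

Lemma sum_eFp : \sum_(u : 'F_p) eFp u = 0.
Proof.
rewrite (sum_Fp (fun i => achar R p i)).
have := sum_achar R p_gt0 1; under eq_bigr do rewrite mul1r.
by move=> ->; rewrite dvdzE /= dvdn1 gtn_eqF ?prime_gt1.
Qed.

Lemma S_Fp (a : nat) (n : int) :
  S R p a n = \sum_(u : 'F_p) eFp (a%:R * u ^+ 2 + n%:~R * u).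
Proof.
rewrite S_sum // -(sum_Fp (fun x => achar R p (qphase a n x))).
apply: eq_bigr => u _; rewrite -eFp_int; congr eFp.
by rewrite /qphase rmorphD !rmorphM /= -!pmulrn natr_Zp expr2.
Qed.

Local Notation g := (gauss_sum eFp 1).

Lemma sqr_norm_gauss_sum : `|g| ^+ 2 = p%:R.
Proof.
have -> : g = S R p 1 0 by rewrite S_Fp; apply: eq_bigr => u _; rewrite mul0r addr0.
by rewrite sqr_norm_S ?p_odd ?coprime1n.
Qed.

Lemma S_Fp_gauss (u : 'F_p) (n : int) : u != 0 ->
  S R p u n = eFp (- (n%:~R ^+ 2 / (4%:R * u))) * (g *~ legendre u).
Proof.
move=> u_neq0; rewrite S_Fp natr_Zp (sum_psi_quadratic Fp_odd eFpD) //.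
by rewrite (gauss_sum_legendre Fp_odd sum_eFp).
Qed.

Lemma invmod_Fp (u : 'F_p) : u != 0 -> ((invmod p u)%:R : 'F_p) = u^-1.
Proof.
move=> u_neq0.
have val_lt (v : 'F_p) : (v < p)%N by rewrite -[p in (_ < p)%N](Fp_cast p_prime) ltn_ord.
have eq_mod (m n : nat) : (m == n %[mod p])%N = (m%:R == n%:R :> 'F_p).
  by rewrite -val_eqE /= !val_Fp_nat.
rewrite /invmod; case: pickP => [b | no_inv] /=.
  by rewrite eq_mod natrM natr_Zp => /eqP u_b; apply: (mulfI u_neq0); rewrite u_b mulfV.
have := no_inv (Ordinal (val_lt u^-1)).
by rewrite /= eq_mod natrM !natr_Zp mulfV // eqxx.
Qed.

Lemma S3_achar_invmod (u : 'F_p) (n1 n2 n3 m : int) : u != 0 ->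
  S R p u n1 * S R p u n2 * S R p u n3 * achar R p ((invmod p u)%:Z * m) =
  g ^+ 3 * (eFp ((m%:~R - (n1%:~R ^+ 2 + n2%:~R ^+ 2 + n3%:~R ^+ 2) / 4%:R) * u^-1)
            *~ legendre u).
Proof.
move=> u_neq0; have two_neq0 := finField_two_neq0 Fp_odd.
have four_neq0 : (4%:R : 'F_p) != 0 by rewrite (natrM _ 2 2) mulf_neq0.
rewrite !S_Fp_gauss // -eFp_int rmorphM /= -pmulrn invmod_Fp //.
set L := (legendre u)%:~R : R[i].
have L3 : L ^+ 3 = L by rewrite -rmorphXn /= exprS expr2 (legendre_sqr u_neq0) mulr1.
rewrite -[g *~ _]mulrzr -[eFp _ *~ _]mulrzr -/L; set e := eFp (_ / u).
have -> : e = eFp (- (n1%:~R ^+ 2 / (4%:R * u))) * eFp (- (n2%:~R ^+ 2 / (4%:R * u))) *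
              eFp (- (n3%:~R ^+ 2 / (4%:R * u))) * eFp (u^-1 * m%:~R).
  by rewrite -!eFpD /e; congr eFp; field; rewrite u_neq0 four_neq0.
by rewrite -[in RHS]L3; ring.
Qed.

Lemma T_Fp (n1 n2 n3 m : int) :
  T R p n1 n2 n3 m = g ^+ 3 *
    legendre_sum eFp (m%:~R - (n1%:~R ^+ 2 + n2%:~R ^+ 2 + n3%:~R ^+ 2) / 4%:R).
Proof.
pose X (a : nat) := if coprime a p then
  S R p a n1 * S R p a n2 * S R p a n3 * achar R p ((invmod p a)%:Z * m) else 0.
have coprime_pp : coprime p p = false by rewrite prime_coprime ?dvdnn.
have coprime_0p : coprime 0 p = false by rewrite coprime_sym prime_coprime ?dvdn0.
transitivity (\sum_(0 <= a < p) X a).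
  rewrite /T big_mkcond big_nat_recr //= coprime_pp addr0.
  by rewrite [RHS]big_ltn // {1}/X coprime_0p add0r.
rewrite -(sum_Fp X) /legendre_sum mulr_sumr [RHS](reindex_inj invr_inj).
apply: eq_bigr => u _; rewrite /X (coprime_Fp _ p_prime) legendreV.
have [-> | u_neq0] := eqVneq u 0; first by rewrite legendre0 mulr0z mulr0.
exact: S3_achar_invmod.
Qed.

Lemma norm_T_prime_le (n1 n2 n3 m : int) :
  `|T R p n1 n2 n3 m| <= ((p%:R : R) ^+ 2)%:C.
Proof.
rewrite T_Fp; set K := (_ - _).
have [-> | K_neq0] := eqVneq K 0.
  by rewrite legendre_sum0 ?mulr0 ?normr0 ?ler0c ?exprn_ge0 ?ler0n.
rewrite legendre_sumE // -(gauss_sum_legendre_sum Fp_odd sum_eFp) ?oner_eq0 //.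
rewrite normrM normrMz normr_legendre // mulr1z normrX -exprSr.
by rewrite (exprM _ 2 2) sqr_norm_gauss_sum // rmorphXn /= rmorph_nat.
Qed.

End PrimeModulus.

Lemma powR_natmul_half (R : realType) (x : R) (k n : nat) : 0 <= x ->
  x `^ (k%:R * n%:R / 2) = Num.sqrt (x ^+ n) ^+ k.
Proof.
move=> x_ge0; rewrite (_ : k%:R * n%:R / 2 = n%:R * 2^-1 * k%:R); last by ring.
by rewrite !powRrM (powR_mulrn _ x_ge0) powR12_sqrt ?exprn_ge0 // powR_mulrn ?sqrtr_ge0.
Qed.

Theorem lemma3p7 (R : realType) (p : nat) (hp : prime p) (hp2 : (2 < p)%N) :
  (forall (r : nat) (n1 n2 n3 m : int), (0 < r)%N ->
     `|T R (p ^ r)%N n1 n2 n3 m| <= ((p%:R : R) `^ (5 * r%:R / 2))%:C)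
  /\
  (forall (n1 n2 n3 m : int),
     `|T R p n1 n2 n3 m| <= ((p%:R : R) ^+ 2)%:C).
Proof.
split=> [r n1 n2 n3 m r_gt0 | n1 n2 n3 m]; last exact: norm_T_prime_le.
rewrite powR_natmul_half ?ler0n // -natrX.
by apply: norm_T_le; rewrite oddX prime_gt2_odd ?orbT.
Qed.
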